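(* Let $\mathbb{K}=(K,+,0)$ be a positive commutative monoid and let $H$ be a hypergraph. If $H$ has the local-to-global consistency property for $\mathbb{K}$-relations, then $H$ is acyclic.
   Context: A commutative monoid $\mathbb{K}=(K,+,0)$ is positive if $p+q=0$ implies $p=q=0$; all monoids are assumed to have at least two elements. An attribute $A$ has an associated domain $\mathrm{Dom}(A)$ (attribute domains are arbitrary sets and may be chosen as needed). For a finite set $X$ of attributes, $\mathrm{Tup}(X)$ is the set of functions assigning to each $A\in X$ an element of $\mathrm{Dom}(A)$ ($X$-tuples); for $Y\subseteq X$ and $t\in\mathrm{Tup}(X)$, $t[Y]$ is the restriction of $t$ to $Y$. A $\mathbb{K}$-relation over $X$ is a function $R:\mathrm{Tup}(X)\to K$ whose support $R'=\{t:R(t)\neq 0\}$ is finite. For $Y\subseteq X$ the marginal $R[Y]$ is the $\mathbb{K}$-relation over $Y$ with $R[Y](t)=\sum_{r\in R',\,r[Y]=t}R(r)$. For a sequence $X_1,\dots,X_m$ of finite attribute sets (a schema) and $\mathbb{K}$-relations $R_i$ over $X_i$, the collection $R_1,\dots,R_m$ is $k$-wise consistent if for every $q\le k$ and indices $i_1,\dots,i_q\in[m]$ there is a $\mathbb{K}$-relation $W$ over $X_{i_1}\cup\dots\cup X_{i_q}$ with $W[X_{i_j}]=R_{i_j}$ for all $j$; pairwise consistent means $2$-wise, globally consistent means $m$-wise. A hypergraph $H=(V,E)$ (finite, hyperedges non-empty subsets of $V$) is identified with the schema listing its hyperedges, vertices viewed as attributes. $H$ has the local-to-global consistency property for $\mathbb{K}$-relations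 if, for a listing $X_1,\dots,X_m$ of its hyperedges, every pairwise consistent collection of $\mathbb{K}$-relations $R_1(X_1),\dots,R_m(X_m)$ is globally consistent. $H$ is acyclic (in the sense of Beeri, Fagin, Maier, Yannakakis) iff it has a join tree: a tree whose vertices are the hyperedges of $H$ such that for every vertex $v$ of $H$, the hyperedges containing $v$ form a connected subtree. *)

From mathcomp Require Import all_boot.

Set Implicit Arguments.
Unset Strict Implicit.
Unset Printing Implicit Defensive.

Definition positive_comm_monoid (K : Type) (add : K -> K -> K) (zero : K) : Prop :=
  [/\ (forall x y z, add x (add y z) = add (add x y) z),
      (forall x y, add x y = add y x),
      (forall x, add zero x = x),
      (forall p q, add p q = zero -> p = zero /\ q = zero)
    & exists a b : K, a <> b].

(* Tuples.  Attributes are the elements of a finite type V, attribute  *)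
(* A has domain Dom A.  A (partial) tuple is a dependent function that *)
(* is defined (Some _) exactly on its set of attributes; an X-tuple is *)
(* a partial tuple whose domain is X.                                  *)
Definition ptuple (V : finType) (Dom : V -> eqType) :=
  {dffun forall a : V, option (Dom a)}.

Definition tdom (V : finType) (Dom : V -> eqType) (t : ptuple Dom) : {set V} :=
  [set a | t a != None].

Definition restr (V : finType) (Dom : V -> eqType) (Y : {set V}) (t : ptuple Dom)
  : ptuple Dom :=
  finfun (fun a : V => (if a \in Y then t a else None) : option (Dom a)).

(* R is a K-relation over X: a map from X-tuples to K with finite support;
   it is represented as a map on all partial tuples vanishing outside the
   X-tuples. *)
Definition is_Krel (K : Type) (zero : K) (V : finType) (Dom : V -> eqType)
  (X : {set V}) (R : ptuple Dom -> K) : Prop :=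
  (forall t, R t <> zero -> tdom t = X) /\
  (exists s : seq (ptuple Dom), forall t, R t <> zero -> t \in s).

(* The marginal is the sum
   over the (finite) support of W, computed along any duplicate-free list s
   containing the support (terms outside the support are zero). *)
Definition marginal_is (K : Type) (add : K -> K -> K) (zero : K)
  (V : finType) (Dom : V -> eqType)
  (W : ptuple Dom -> K) (Y : {set V}) (R : ptuple Dom -> K) : Prop :=
  exists s : seq (ptuple Dom),
    [/\ uniq s, (forall r, W r <> zero -> r \in s)
      & forall t, R t = foldr add zero [seq W r | r <- s & restr Y r == t]].

Definition kwise_consistent (K : Type) (add : K -> K -> K) (zero : K)
  (V : finType) (Dom : V -> eqType) (m : nat) (X : 'I_m -> {set V})
  (R : 'I_m -> ptuple Dom -> K) (k : nat) : Prop :=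
  forall (q : nat), q <= k -> forall idx : 'I_q -> 'I_m,
    exists W : ptuple Dom -> K,
      is_Krel zero (\bigcup_(j < q) X (idx j)) W /\
      forall j : 'I_q, marginal_is add zero W (X (idx j)) (R (idx j)).

Definition pairwise_consistent K add zero V Dom m X R :=
  @kwise_consistent K add zero V Dom m X R 2.
Definition globally_consistent K add zero V Dom m X R :=
  @kwise_consistent K add zero V Dom m X R m.

Definition hypergraph (V : finType) (E : {set {set V}}) : Prop :=
  forall e, e \in E -> e != set0.

Definition listing (V : finType) (E : {set {set V}}) (m : nat)
  (X : 'I_m -> {set V}) : Prop :=
  injective X /\ (forall e, e \in E <-> exists i, X i = e).

Definition local_to_global (K : Type) (add : K -> K -> K) (zero : K)
  (V : finType) (E : {set {set V}}) : Prop :=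
  exists (m : nat) (X : 'I_m -> {set V}), listing E X /\
    forall (Dom : V -> eqType) (R : 'I_m -> ptuple Dom -> K),
      (forall i, is_Krel zero (X i) (R i)) ->
      pairwise_consistent add zero X R -> globally_consistent add zero X R.

Definition is_tree (T : finType) (N : {set T}) (g : rel T) : Prop :=
  [/\ (forall x y, g x y -> (x \in N) && (y \in N)),
      (forall x y, g x y = g y x),
      (forall x, ~~ g x x),
      (forall x y, x \in N -> y \in N ->
         exists p : seq T, path g x p /\ last x p = y)
    & (forall p : seq T, 3 <= size p -> ~ ucycle g p)].

Definition join_tree (V : finType) (E : {set {set V}}) (g : rel {set V}) : Prop :=
  is_tree E g /\
  forall (v : V) (e f : {set V}), e \in E -> f \in E -> v \in e -> v \in f ->
    exists p : seq {set V}, [/\ path g e p, last e p = f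
                              & forall x, x \in p -> v \in x].

Definition acyclic (V : finType) (E : {set {set V}}) : Prop :=
  exists g : rel {set V}, join_tree E g.

(* If H is not acyclic, the GYO reduction (delete a vertex lying in at most one
   edge, delete an edge whose trace is contained in another one) gets stuck on
   some vertex set U with a family A of at least two edges whose traces on U
   form an antichain and cover every vertex of U at least twice.  Over Z_3,
   choose weights a v X, nonzero exactly when v lies in U and in the edge X of A,
   with zero sum over X for every v.  The edge X of A gets the linear equation
   sum_v a v X * y_v = [X == X0], and every hyperedge inherits the equation of
   the edge of A with the same trace on U.  The K-relation of a hyperedge Z maps
   a Z-tuple to a0 times the number of solutions of its equation projecting onto
   it; positivity makes such a multiple vanish only for a zero count.  Two
   distinct equations always have a variable that lies outside Z and occurs in
   one of them only, so exactly a third of the solutions of the equation of Z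
   also solve the other one: the relations are pairwise consistent.  A global
   witness would provide one assignment solving every equation of A, and summing
   these equations gives 1 = 0. *)

From mathcomp Require Import all_boot all_algebra.
From mathcomp Require Import ring zify.
From Stdlib Require Import Classical.
Import GRing.Theory.

Set Implicit Arguments.
Unset Strict Implicit.
Unset Printing Implicit Defensive.

(** * Marginals over a positive monoid *)

Section PositiveMonoid.

Variables (K : Type) (add : K -> K -> K) (zero : K).
Hypothesis monoidK : positive_comm_monoid add zero.

Definition nmul (n : nat) (a : K) : K := iter n (add a) zero.

Lemma nmulD m n a : nmul (m + n) a = add (nmul m a) (nmul n a).
Proof.
case: monoidK => addA _ add0 _ _.
by elim: m => [|m IHm] /=; rewrite ?add0 // -/(nmul (m + n) a) IHm addA.
Qed.

Lemma nmul_eq0 n a : a <> zero -> nmul n a = zero -> n = 0.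
Proof. by case: monoidK => _ _ _ add_eq0 _; case: n => //= n a0 /add_eq0[]. Qed.

Lemma foldr_nmul (T : Type) (f : T -> nat) a (s : seq T) :
  foldr add zero [seq nmul (f r) a | r <- s] = nmul (\sum_(r <- s) f r) a.
Proof. by elim: s => [|x s IHs] /=; rewrite ?big_nil ?big_cons ?nmulD ?IHs. Qed.

Lemma foldr_neq0 (T : eqType) (f : T -> K) (s : seq T) x :
  x \in s -> f x <> zero -> foldr add zero [seq f r | r <- s] <> zero.
Proof.
case: monoidK => _ _ _ add_eq0 _.
elim: s => [|y s IHs] //=; rewrite inE => /orP[/eqP<- | xs] fx0 /add_eq0[] //.
by move=> _; apply: IHs.
Qed.

Lemma foldr_neq0_exists (T : eqType) (f : T -> K) (s : seq T) :
  foldr add zero [seq f r | r <- s] <> zero -> exists2 x, x \in s & f x <> zero.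
Proof.
case: monoidK => _ _ add0 _ _.
elim: s => [|y s IHs] //= sum_neq0.
have [fy0 | ] := classic (f y = zero); last by exists y; rewrite ?mem_head.
have [|x xs fx0] := IHs; first by move=> sum0; apply: sum_neq0; rewrite fy0 sum0 add0.
by exists x; rewrite // inE xs orbT.
Qed.

Lemma exists_neq0 : exists a : K, a <> zero.
Proof.
case: monoidK => _ _ _ _ [a [b neq_ab]].
have [a0 | ] := classic (a = zero); last by exists a.
by exists b => b0; apply: neq_ab; rewrite a0 b0.
Qed.

End PositiveMonoid.

Section Marginals.

Variables (K : Type) (add : K -> K -> K) (zero : K) (V : finType) (Dom : V -> eqType).
Hypothesis monoidK : positive_comm_monoid add zero.
Variables (W R : ptuple Dom -> K) (Y : {set V}).
Hypothesis margW : marginal_is add zero W Y R.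

Lemma marginal_neq0 r : W r <> zero -> R (restr Y r) <> zero.
Proof.
case: margW => s [_ supp_s ->] Wr.
by apply: (foldr_neq0 monoidK (x := r)); rewrite // mem_filter eqxx supp_s.
Qed.

Lemma marginal_neq0_exists t : R t <> zero -> exists2 r, W r <> zero & restr Y r = t.
Proof.
case: margW => s [_ _ ->] /(foldr_neq0_exists monoidK)[r].
by rewrite mem_filter => /andP[/eqP <- _]; exists r.
Qed.

End Marginals.

Lemma pairwise_consistent_of K add (zero : K) (V : finType) (Dom : V -> eqType) m
    (X : 'I_m -> {set V}) (R : 'I_m -> ptuple Dom -> K) :
  (forall i j, exists W, [/\ is_Krel zero (X i :|: X j) W,
     marginal_is add zero W (X i) (R i) & marginal_is add zero W (X j) (R j)]) ->
  pairwise_consistent add zero X R.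
Proof.
move=> pair [|[|[|q]]] // _ idx.
- exists (fun=> zero); split=> [|[] //].
  by split=> [t [] | ]; last by exists [::] => t [].
- have [W [WK marg _]] := pair (idx ord0) (idx ord0).
  by exists W; rewrite big_ord1; rewrite setUid in WK; split=> // j; rewrite (ord1 j).
- have [W [WK marg0 marg1]] := pair (idx ord0) (idx (lift ord0 ord0)).
  exists W; rewrite !big_ord_recl big_ord0 setU0; split=> // -[[|[|//]] lt_j2].
    by rewrite (_ : Ordinal lt_j2 = ord0) //; apply: val_inj.
  by rewrite (_ : Ordinal lt_j2 = lift ord0 ord0) //; apply: val_inj.
Qed.

(** * GYO reduction *)

Section Reduction.

Variable V : finType.
Implicit Types (A E : {set {set V}}) (U : {set V}) (X Y Z : {set V}) (g : rel {set V}).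

(* A reduction state (A, U) keeps the edges of A, each restricted to the
   vertices U. *)
Definition join_tree_on A U g : Prop :=
  forall v e f, v \in U -> e \in A -> f \in A -> v \in e -> v \in f ->
    exists p, [/\ path g e p, last e p = f & forall x, x \in p -> v \in x].

Definition covered E A U : Prop :=
  forall Z, Z \in E -> exists2 X, X \in A & Z :&: U \subset X :&: U.

Definition gyo_irreducible A U : Prop :=
  [/\ 1 < #|A|, {in U, forall v, 1 < #|[set X in A | v \in X]|}
    & {in A &, forall X Y, X != Y -> ~~ (X :&: U \subset Y :&: U)}].

Lemma join_tree_card_le1 A U : #|A| <= 1 -> exists g, is_tree A g /\ join_tree_on A U g.
Proof.
move=> /card_le1_eqP eqA; exists [rel x y | false]; split.
  split=> // [x y xA yA | [|x p] //= _].
    by exists [::]; rewrite (eqA x y).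
  by rewrite /ucycle /= rcons_path; case: p.
by move=> v e f _ eA fA _ _; exists [::]; rewrite (eqA e f).
Qed.

Lemma join_tree_on_setD1 A U v g :
  #|[set X in A | v \in X]| <= 1 -> join_tree_on A (U :\ v) g -> join_tree_on A U g.
Proof.
move=> /card_le1_eqP eqAv jt w e f wU eA fA we wf.
have [wv | wv] := eqVneq w v; last by apply: jt; rewrite ?inE ?wv.
by exists [::]; rewrite (eqAv e f) ?inE ?eA ?fA -?wv.
Qed.

Section Leaf.

Variables (A : {set {set V}}) (X Y : {set V}) (g : rel {set V}).
Hypotheses (XA : X \in A) (YA : Y \in A) (neqXY : X != Y).
Hypothesis treeA' : is_tree (A :\ X) g.

Definition leafrel : rel {set V} :=
  [rel a b | g a b || ((a == X) && (b == Y)) || ((a == Y) && (b == X))].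

Lemma sub_leafrel : subrel g leafrel.
Proof. by move=> a b gab; rewrite /leafrel /= gab. Qed.

Let memA' a : a != X -> a \in A -> a \in A :\ X.
Proof. by rewrite !inE => -> ->. Qed.

Let YA' : Y \in A :\ X. Proof. by rewrite memA' // eq_sym. Qed.

Let g_leaf a : ~~ g X a /\ ~~ g a X.
Proof.
case: treeA' => gA gC _ _ _; rewrite gC.
by split; apply/negP => /gA /andP[]; rewrite !inE eqxx.
Qed.

Lemma leafrelXl b : leafrel X b = (b == Y).
Proof.
by rewrite /leafrel /= (negbTE (g_leaf b).1) eqxx (negbTE neqXY) orbF.
Qed.

Lemma leafrelXr a : leafrel a X = (a == Y).
Proof.
rewrite /leafrel /= (negbTE (g_leaf a).2) eqxx andbT /=.
by case: eqP => // ->; rewrite (negbTE neqXY).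
Qed.

Lemma exists_path_leafrel x y : x \in A -> y \in A ->
  exists p, path leafrel x p /\ last x p = y.
Proof.
case: treeA' => _ _ _ conn _.
move=> xA yA; have [-> | nxX] := eqVneq x X; have [-> | nyX] := eqVneq y X.
- by exists [::].
- have [p [pp <-]] := conn Y y YA' (memA' nyX yA).
  by exists (Y :: p); rewrite /= leafrelXl eqxx (sub_path sub_leafrel pp).
- have [p [pp lp]] := conn x Y (memA' nxX xA) YA'.
  exists (rcons p X); rewrite last_rcons rcons_path lp leafrelXr eqxx andbT.
  by rewrite (sub_path sub_leafrel pp).
- have [p [pp lp]] := conn x y (memA' nxX xA) (memA' nyX yA).
  by exists p; rewrite (sub_path sub_leafrel pp).
Qed.

Lemma not_ucycle_leafrel p : 3 <= size p -> ~ ucycle leafrel p.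
Proof.
case: treeA' => _ _ _ _ acyc size_p /andP[cyc_p uniq_p].
have [Xp | Xp] := boolP (X \in p); last first.
  apply: (acyc p size_p); rewrite /ucycle uniq_p andbT.
  have notX : all (predC1 X) p by apply/allP => z zp; apply: contraNneq Xp => <-.
  apply: sub_in_cycle notX cyc_p => a b /= /negbTE aX /negbTE bX.
  by rewrite /leafrel /= aX bX !andbF !orbF.
(* X is a leaf: both of its neighbours on the cycle must be Y. *)
have [i q rot_p] := rot_to Xp.
move: (size_p) cyc_p uniq_p; rewrite -(size_rot i) -(rot_cycle i) -(rot_uniq i) rot_p.
case: q {rot_p} => [|y [|z q]] //= _; rewrite rcons_path /= leafrelXl leafrelXr.
case/and4P=> /eqP-> _ _ /eqP lastY /and4P[_ + _ _].
by rewrite -lastY mem_last.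
Qed.

Lemma is_tree_leafrel : is_tree A leafrel.
Proof.
case: treeA' => gA gC girr _ _; split.
- move=> a b /orP[/orP[/gA | ] | ] /andP; last 2 first.
  + by case=> /eqP-> /eqP->; rewrite XA YA.
  + by case=> /eqP-> /eqP->; rewrite XA YA.
  by case; rewrite !inE => /andP[_ ->] /andP[_ ->].
- by move=> a b; rewrite /leafrel /= gC orbAC (andbC (a == X)) (andbC (a == Y)).
- move=> a; rewrite /leafrel /= (negbTE (girr a)) /=.
  by apply/negP => /orP[] /andP[/eqP-> /eqP eqXY]; move: neqXY; rewrite eqXY eqxx.
- exact: exists_path_leafrel.
- exact: not_ucycle_leafrel.
Qed.

Lemma join_tree_on_leafrel U :
  X :&: U \subset Y :&: U -> join_tree_on (A :\ X) U g -> join_tree_on A U leafrel.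
Proof.
move=> sXY jt v e f vU eA fA ve vf.
have vY a : a = X -> v \in a -> v \in Y.
  by move=> -> vX; have /(subsetP sXY) /setIP[] : v \in X :&: U by rewrite inE vX.
have [eX | neX] := eqVneq e X; have [fX | nfX] := eqVneq f X.
- by exists [::]; rewrite eX fX.
- have [p [pp <- allp]] := jt v Y f vU YA' (memA' nfX fA) (vY e eX ve) vf.
  exists (Y :: p); rewrite /= eX leafrelXl eqxx (sub_path sub_leafrel pp).
  by split=> // x /predU1P[-> | /allp]; first exact: vY e eX ve.
- have [p [pp lp allp]] := jt v e Y vU (memA' neX eA) YA' ve (vY f fX vf).
  exists (rcons p X); rewrite last_rcons rcons_path lp leafrelXr eqxx andbT fX.
  split=> [|//|x]; first exact: (sub_path sub_leafrel pp).
  by rewrite mem_rcons => /predU1P[-> | /allp]; first by rewrite -fX.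
- have [p [pp lp allp]] := jt v e f vU (memA' neX eA) (memA' nfX fA) ve vf.
  by exists p; rewrite (sub_path sub_leafrel pp).
Qed.

End Leaf.

Lemma covered_setD1_vertex E A U v : covered E A U -> covered E A (U :\ v).
Proof.
move=> cov Z ZE; have [X XA sZX] := cov Z ZE; exists X => //.
apply/subsetP => w /setIP[wZ /setD1P[wv wU]].
have /(subsetP sZX) /setIP[wX _] : w \in Z :&: U by rewrite inE wZ.
by rewrite !inE wX wv wU.
Qed.

Lemma covered_setD1_leaf E A U X Y :
  Y \in A -> X != Y -> X :&: U \subset Y :&: U -> covered E A U -> covered E (A :\ X) U.
Proof.
move=> YA nXY sXY cov Z ZE; have [X' X'A sZX'] := cov Z ZE.
have [eqX' | nX'] := eqVneq X' X; last by exists X'; rewrite ?inE ?nX'.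
by exists Y; [rewrite !inE eq_sym nXY | rewrite (subset_trans sZX') ?eqX'].
Qed.

Lemma join_tree_of_reducible E :
  (forall A U, A \subset E -> covered E A U -> ~ gyo_irreducible A U) ->
  forall A U, A \subset E -> covered E A U -> exists g, is_tree A g /\ join_tree_on A U g.
Proof.
move=> reducible A U; have [n] := ubnP (#|A| + #|U|).
elim: n A U => // n IHn A U /ltnSE sizeAU sAE cov.
have [/join_tree_card_le1 // | A_gt1] := leqP #|A| 1.
have [v /andP[vU Av] | no_vertex] := pickP [pred v in U | #|[set X in A | v \in X]| <= 1].
  have [|g [treeA jt]] := IHn A (U :\ v) _ sAE (covered_setD1_vertex v cov).
    by move: sizeAU; rewrite (cardsD1 v U) vU addnS.
  by exists g; split => //; apply: join_tree_on_setD1 Av jt.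
have [[X Y] /and4P[/= XA YA nXY sXY] | no_leaf] := pickP
  [pred XY : {set V} * {set V} | [&& XY.1 \in A, XY.2 \in A, XY.1 != XY.2
                                   & XY.1 :&: U \subset XY.2 :&: U]].
  have sAE' : A :\ X \subset E by apply: subset_trans sAE; apply: subD1set.
  have [|g [treeA jt]] := IHn (A :\ X) U _ sAE' (covered_setD1_leaf YA nXY sXY cov).
    by move: sizeAU; rewrite (cardsD1 X A) XA addSn.
  by exists (leafrel X Y g); split; [apply: is_tree_leafrel | apply: join_tree_on_leafrel].
exfalso; apply: (reducible A U sAE cov); split=> // [v vU | X Y XA YA nXY].
  by have := no_vertex v; rewrite /= vU ltnNge => /negbT.
by have := no_leaf (X, Y); rewrite /= XA YA nXY => /negbT.
Qed.

Lemma acyclic_of_reducible E :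
  (forall A U, A \subset E -> covered E A U -> ~ gyo_irreducible A U) -> acyclic E.
Proof.
move=> reducible.
have [|g [treeE jt]] := @join_tree_of_reducible E reducible E [set: V] (subxx E).
  by move=> Z ZE; exists Z.
by exists g; split=> // v e f eE fE; apply: jt.
Qed.

End Reduction.

(** * Relations counting solutions over Z_3 *)

Section Assignments.

Variable V : finType.

Definition assignment := {ffun option V -> 'Z_3}.

Definition dom3 : V -> eqType := fun=> ('Z_3 : eqType).

Implicit Types (S Y : {set V}) (y : assignment) (P : pred assignment) (t : ptuple dom3).

Definition proj S y : ptuple dom3 :=
  finfun (fun v => (if v \in S then Some (y (Some v)) else None) : option (dom3 v)).

Definition update y (k : option V) (d : 'Z_3) : assignment :=
  [ffun k' => if k' == k then d else y k'].

Definition count_proj P S t : nat := #|[set y | P y && (proj S y == t)]|.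

Definition proj_seq S : seq (ptuple dom3) := undup [seq proj S y | y <- enum {: assignment}].

Definition extend t : assignment :=
  [ffun k => if k is Some v then odflt 0%R (t v) else 0%R].

Lemma tdom_proj S y : tdom (proj S y) = S.
Proof. by apply/setP => v; rewrite !inE ffunE; case: (v \in S). Qed.

Lemma restr_proj S Y y : Y \subset S -> restr Y (proj S y) = proj Y y.
Proof.
move=> sYS; apply/ffunP => v; rewrite !ffunE.
by case vY: (v \in Y); rewrite ?(subsetP sYS v vY).
Qed.

Lemma proj_update S y k d : k \notin Some @: S -> proj S (update y k d) = proj S y.
Proof.
move=> kS; apply/ffunP => v; rewrite !ffunE.
case vS: (v \in S) => //; have [eq_vk | //] := eqVneq (Some v) k.
by move: kS; rewrite -eq_vk mem_imset ?vS //; apply: Some_inj.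
Qed.

Lemma extend_proj S y t v : proj S y = restr S t -> v \in S -> extend t (Some v) = y (Some v).
Proof.
by move=> /ffunP/(_ v); rewrite !ffunE => + vS; rewrite vS => <-.
Qed.

Lemma mem_proj_seq S y : proj S y \in proj_seq S.
Proof. by rewrite mem_undup map_f ?mem_enum. Qed.

Lemma count_projE P S t : count_proj P S t = \sum_y (P y && (proj S y == t)).
Proof. by rewrite /count_proj -sum1dep_card big_mkcond. Qed.

Lemma count_proj_neq0 P S t : count_proj P S t != 0 -> exists y, P y /\ proj S y = t.
Proof. by rewrite -lt0n card_gt0 => /set0Pn[y]; rewrite inE => /andP[Py /eqP]; exists y. Qed.

Lemma sum_count_proj P S Y t : Y \subset S ->
  \sum_(r <- proj_seq S | restr Y r == t) count_proj P S r = count_proj P Y t.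
Proof.
move=> sYS; under eq_bigr do rewrite count_projE.
rewrite exchange_big count_projE; apply: eq_bigr => y _.
rewrite (big_rem (proj S y)) ?mem_proj_seq //= restr_proj // eqxx andbT.
rewrite big1_seq ?addn0 => [|r /andP[_ r_rem]]; first by case: (P y); case: (_ == t).
have [eq_r | ] := eqVneq (proj S y) r; last by rewrite andbF.
by move: r_rem; rewrite -eq_r mem_rem_uniqF ?undup_uniq.
Qed.

Local Open Scope ring_scope.

Lemma Z3_sqr_eq1 (b : 'Z_3) : b != 0 -> b * b = 1.
Proof. by case: b => -[|[|[|//]]] // ? _; apply/val_inj. Qed.

Definition lin (w : option V -> 'Z_3) y : 'Z_3 := \sum_k w k * y k.

Lemma lin_update w y k d : lin w (update y k d) = lin w y + w k * (d - y k).
Proof.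
rewrite /lin (bigD1 k) //= [in RHS](bigD1 k) //= ffunE eqxx.
under eq_bigr => k' /negbTE nk do rewrite ffunE nk.
ring.
Qed.

Lemma lin_eq_on w y y' : (forall k, w k != 0 -> y k = y' k) -> lin w y = lin w y'.
Proof.
move=> eq_yy'; apply: eq_bigr => k _.
by have [-> | /eq_yy' ->] := eqVneq (w k) 0; rewrite ?mul0r.
Qed.

Lemma lin_solvable w k c : w k != 0 -> exists y, lin w y = c.
Proof.
move=> wk0; exists (update [ffun=> 0] k (w k * c)).
rewrite lin_update ffunE subr0 mulrA Z3_sqr_eq1 // mul1r.
by rewrite /lin big1 ?add0r // => k' _; rewrite ffunE mulr0.
Qed.

(* Shifting the free coordinate k permutes the three level sets of lin w. *)
Lemma count_proj_lin P w S t k c :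
    w k != 0 -> k \notin Some @: S -> (forall y d, P (update y k d) = P y) ->
  (3 * count_proj [pred y | P y && (lin w y == c)] S t = count_proj P S t)%N.
Proof.
move=> wk0 kS P_update.
pose C j := [set y | P y && (proj S y == t) && (lin w y == j)].
have le_C j j' : (#|C j| <= #|C j'|)%N.
  pose shift y := update y k (y k + w k * (j' - j)).
  have shift_inj : injective shift.
    move=> y1 y2 eq12; apply/ffunP => k'; have := congr1 (fun y => y k') eq12.
    by rewrite !ffunE; case: eqP => [-> | //] /addIr.
  rewrite -(card_imset _ shift_inj); apply/subset_leq_card/subsetP => z.
  case/imsetP=> y; rewrite !inE => /andP[/andP[Py /eqP pt] /eqP lin_y] ->.
  rewrite P_update Py proj_update // pt lin_update lin_y eqxx /=.
  by rewrite addrAC subrr add0r mulrA Z3_sqr_eq1 // mul1r addrC subrK.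
have card_C j : #|C j| = #|C c| by apply/eqP; rewrite eqn_leq !le_C.
have -> : count_proj [pred y | P y && (lin w y == c)] S t = #|C c|.
  by apply: eq_card => y; rewrite !inE andbAC.
have -> : count_proj P S t = (\sum_j #|C j|)%N.
  rewrite /count_proj -sum1dep_card (partition_big (lin w) predT) //.
  by apply: eq_bigr => j _; rewrite sum1dep_card.
by rewrite (eq_bigr _ (fun j _ => card_C j)) sum_nat_const card_ord.
Qed.

End Assignments.

Section CountRelations.

Variables (K : Type) (add : K -> K -> K) (zero : K) (a0 : K) (V : finType).
Hypothesis monoidK : positive_comm_monoid add zero.

Implicit Types (S Y : {set V}) (P : pred (assignment V)) (t : ptuple (@dom3 V)).

Definition count_rel (c : nat) P S t : K := nmul add zero (c * count_proj P S t) a0.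

Lemma count_rel_neq0 c P S t : count_rel c P S t <> zero -> exists y, P y /\ proj S y = t.
Proof.
move=> neq0; apply: count_proj_neq0; apply: contra_notN neq0 => /eqP count0.
by rewrite /count_rel count0 muln0.
Qed.

Lemma count_rel_proj_neq0 c P S y :
  a0 <> zero -> c != 0%N -> P y -> count_rel c P S (proj S y) <> zero.
Proof.
move=> a0_neq0 c_neq0 Py /(nmul_eq0 monoidK a0_neq0) /eqP.
rewrite muln_eq0 (negbTE c_neq0) /count_proj cards_eq0 => /eqP/setP/(_ y).
by rewrite !inE Py eqxx.
Qed.

Lemma is_Krel_count_rel c P S : is_Krel zero S (count_rel c P S).
Proof.
split=> [t | ]; first by case/count_rel_neq0=> y [_ <-]; apply: tdom_proj.
by exists (proj_seq S) => t /count_rel_neq0[y [_ <-]]; apply: mem_proj_seq.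
Qed.

Lemma marginal_count_rel c P S Y (R : ptuple (@dom3 V) -> K) :
  Y \subset S -> (forall t, R t = count_rel c P Y t) ->
  marginal_is add zero (count_rel c P S) Y R.
Proof.
move=> sYS RE; exists (proj_seq S); split=> [|r /count_rel_neq0[y [_ <-]]|t].
- exact: undup_uniq.
- exact: mem_proj_seq.
by rewrite RE (foldr_nmul monoidK (fun r => c * count_proj P S r)%N) big_filter -big_distrr
  /= sum_count_proj.
Qed.

End CountRelations.

Local Open Scope ring_scope.

Lemma exists_zero_sum_Z3 (T : finType) (S : {set T}) : #|S| != 1%N ->
  exists f : T -> 'Z_3, (forall x, (f x != 0) = (x \in S)) /\ \sum_x f x = 0.
Proof.
have [n] := ubnP #|S|; elim: n S => // n IHn S /ltnSE leSn S_neq1.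
have [/eqP | S_gt0] := posnP #|S|.
  by rewrite cards_eq0 => /eqP->; exists (fun=> 0); rewrite big1 //; split=> // x; rewrite eqxx inE.
have [S3 | S_neq3] := eqVneq #|S| 3%N.
  exists (fun x => if x \in S then 1 else 0); split=> [x | ]; first by case: (x \in S).
  by rewrite -big_mkcond sumr_const S3; apply/val_inj.
have [x xS] : exists x, x \in S by apply/set0Pn; rewrite -card_gt0.
have [y yS'] : exists y, y \in S :\ x.
  by apply/set0Pn; rewrite -card_gt0 (cardsD1 x S) xS in S_gt0 S_neq1 *; lia.
have [f [supp_f sum_f]] : exists f : T -> 'Z_3,
    (forall z, (f z != 0) = (z \in S :\ x :\ y)) /\ \sum_z f z = 0.
  apply: IHn; move: leSn S_neq1 S_neq3;
    by rewrite (cardsD1 x S) (cardsD1 y (S :\ x)) xS yS' /=; lia.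
have [yx yS] := setD1P yS'.
have fx : f x = 0 by apply/eqP; rewrite -[_ == _]negbK supp_f !inE eqxx andbF.
have fy : f y = 0 by apply/eqP; rewrite -[_ == _]negbK supp_f !inE eqxx.
exists (fun z => f z + (z == x)%:R - (z == y)%:R); split=> [z | ].
  have [-> | zx] := eqVneq z x; first by rewrite fx (eq_sym x y) (negbTE yx) xS subr0 add0r.
  have [-> | zy] := eqVneq z y; first by rewrite fy add0r sub0r oppr_eq0 yS.
  by rewrite subr0 addr0 supp_f !inE zx zy.
rewrite sumrB big_split /= sum_f add0r.
rewrite (bigD1 x) //= eqxx big1 ?addr0 => [|z /negbTE-> //].
by rewrite (bigD1 y) //= eqxx big1 ?addr0 ?subrr // => z /negbTE->.
Qed.

(** * The equations of an irreducible core *)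

Section Construction.

Variables (V : finType) (E A : {set {set V}}) (U : {set V}).
Hypothesis covE : covered E A U.
Hypothesis antichainA : {in A &, forall X Y, X != Y -> ~~ (X :&: U \subset Y :&: U)}.
Variable a : V -> {set V} -> 'Z_3.
Hypothesis supp_a : forall v X, (a v X != 0) = [&& X \in A, v \in X & v \in U].
Variable X0 : {set V}.

Implicit Types (X Y Z : {set V}) (l : option {set V}).

Definition label Z : option {set V} := [pick X in A | Z :&: U == X :&: U].

(* The hyperedge Z carries the equation of label Z; unlabelled hyperedges carry
   the equation [y None = 0] on the coordinate None, which lies in no hyperedge. *)
Definition coef l (k : option V) : 'Z_3 :=
  match l, k with
  | Some X, Some v => a v X
  | None, None => 1
  | _, _ => 0
  end.

Definition rhs l : 'Z_3 := if l is Some X then (X == X0)%:R else 0.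

Definition equation l : pred (assignment V) := fun y => lin (coef l) y == rhs l.

Lemma labelP Z X : label Z = Some X -> X \in A /\ Z :&: U = X :&: U.
Proof. by rewrite /label; case: pickP => // X' /andP[X'A /eqP ZX'] [<-]. Qed.

Lemma label_eq Z X : X \in A -> Z :&: U = X :&: U -> label Z = Some X.
Proof.
move=> XA ZX; rewrite /label; case: pickP => [X' /andP[X'A /eqP ZX'] | /(_ X)].
  have [-> // | neqX'] := eqVneq X' X.
  by move: (antichainA X'A XA neqX'); rewrite -ZX' ZX subxx.
by rewrite XA ZX eqxx.
Qed.

Lemma equation_update l y k d : coef l k = 0 -> equation l (update y k d) = equation l y.
Proof. by move=> lk0; rewrite /equation lin_update lk0 mul0r addr0. Qed.

Lemma separating_coordinate Z Z' : Z \in E -> label Z != label Z' ->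
  exists k, [/\ coef (label Z') k != 0, k \notin Some @: Z & coef (label Z) k = 0].
Proof.
move=> ZE; case lZ': (label Z') => [X'|] neq_l; last first.
  exists None; split=> //; first by apply/imsetP => -[].
  by case: (label Z) neq_l.
have [X'A Z'X'] := labelP lZ'.
have [v /andP[vX'U vZ] | X'U_sub] := pickP [pred v in X' :&: U | v \notin Z]; last first.
  have sX'Z : X' :&: U \subset Z :&: U.
    apply/subsetP => w wX'U; have := X'U_sub w; rewrite /= wX'U => /negbFE wZ.
    by rewrite inE wZ; case/setIP: wX'U.
  have [X XA sZX] := covE ZE.
  have eqX'X : X' = X.
    apply/eqP; apply: contraT => neqX'X.
    by move: (antichainA X'A XA neqX'X); rewrite (subset_trans sX'Z sZX).
  have ZX' : Z :&: U = X' :&: U by apply/eqP; rewrite eqEsubset sX'Z eqX'X sZX.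
  by rewrite (label_eq X'A ZX') eqxx in neq_l.
have [vX' vU] := setIP vX'U.
exists (Some v); split=> /=; first by rewrite supp_a X'A vX' vU.
  by rewrite mem_imset //; apply: Some_inj.
case lZ: (label Z) => [X|] //=; have [XA ZX] := labelP lZ.
apply/eqP; apply: contraNT vZ; rewrite supp_a XA vU andbT /= => vX.
by have /setIP[] : v \in Z :&: U by rewrite ZX inE vX.
Qed.

Hypothesis a_sum0 : forall v, \sum_X a v X = 0.

Lemma equations_inconsistent y : X0 \in A -> ~ {in A, forall Y, equation (Some Y) y}.
Proof.
move=> X0A sol.
have sum_coef k : \sum_(Y in A) coef (Some Y) k = 0.
  case: k => [v|] /=; last by rewrite big1.
  transitivity (\sum_X a v X); last exact: a_sum0.
  rewrite [RHS](bigID (fun Y => Y \in A)) /= [X in _ = _ + X]big1 ?addr0 //.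
  by move=> Y /negbTE YA; apply/eqP; rewrite -[_ == _]negbK supp_a YA.
have : \sum_(Y in A) rhs (Some Y) = \sum_(Y in A) lin (coef (Some Y)) y.
  by apply: eq_bigr => Y /sol /eqP.
rewrite (bigD1 X0) //= eqxx big1 => [|Y /andP[_ /negbTE-> //]].
rewrite /lin exchange_big big1 => [/eqP | k _]; first by rewrite addr0 oner_eq0.
by rewrite -mulr_suml sum_coef mul0r.
Qed.

Section EdgeRelations.

Variables (K : Type) (add : K -> K -> K) (zero : K) (a0 : K).
Hypothesis monoidK : positive_comm_monoid add zero.
Hypothesis a0_neq0 : a0 <> zero.

Definition edge_rel Z := count_rel add zero a0 1%N (equation (label Z)) Z.

Lemma count_proj_equations Z Z' t : Z \in E -> label Z != label Z' ->
  (3 * count_proj [pred y | equation (label Z) y && equation (label Z') y] Z t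
   = count_proj (equation (label Z)) Z t)%N.
Proof.
move=> ZE neq_l; have [k [Z'k0 kZ Zk0]] := separating_coordinate ZE neq_l.
by apply: count_proj_lin Z'k0 kZ _ => y d; apply: equation_update.
Qed.

Lemma edge_rels_pair_consistent Z Z' : Z \in E -> Z' \in E ->
  exists W, [/\ is_Krel zero (Z :|: Z') W, marginal_is add zero W Z (edge_rel Z)
              & marginal_is add zero W Z' (edge_rel Z')].
Proof.
move=> ZE Z'E; have [eq_l | neq_l] := eqVneq (label Z) (label Z').
  exists (count_rel add zero a0 1%N (equation (label Z)) (Z :|: Z')); split.
  - exact: is_Krel_count_rel.
  - by apply: (marginal_count_rel monoidK (subsetUl Z Z')).
  - by apply: (marginal_count_rel monoidK (subsetUr Z Z')) => t; rewrite /edge_rel eq_l.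
pose both := [pred y | equation (label Z) y && equation (label Z') y].
exists (count_rel add zero a0 3%N both (Z :|: Z')); split.
- exact: is_Krel_count_rel.
- apply: (marginal_count_rel monoidK (subsetUl Z Z')) => t.
  by rewrite /edge_rel /count_rel mul1n count_proj_equations.
- apply: (marginal_count_rel monoidK (subsetUr Z Z')) => t.
  rewrite /edge_rel /count_rel mul1n -(@count_proj_equations Z' Z t Z'E) 1?eq_sym //.
  by congr (nmul _ _ (3 * _)%N _); apply: eq_card => y; rewrite !inE [_ && equation _ _]andbC.
Qed.

Lemma edge_rels_pairwise_consistent m (X : 'I_m -> {set V}) :
  (forall i, X i \in E) -> pairwise_consistent add zero X (fun i => edge_rel (X i)).
Proof.
by move=> XE; apply: pairwise_consistent_of => i j; apply: edge_rels_pair_consistent.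
Qed.

Lemma edge_rels_not_globally_consistent m (X : 'I_m -> {set V}) :
  (forall e, e \in E <-> exists i, X i = e) -> A \subset E -> X0 \in A -> X0 :&: U != set0 ->
  ~ globally_consistent add zero X (fun i => edge_rel (X i)).
Proof.
move=> listX sAE X0A /set0Pn[v0 /setIP[v0X0 v0U]] /(_ m (leqnn m) id)[W [_ margW]].
have edge_of Y : Y \in A -> exists i, X i = Y by move=> YA; apply/listX/(subsetP sAE).
have [w Ww] : exists w, W w <> zero.
  have [i0 Xi0] := edge_of X0 X0A.
  have [y0 /eqP y0_sol] : exists y, lin (coef (Some X0)) y = rhs (Some X0).
    by apply: (lin_solvable (k := Some v0)); rewrite /= supp_a X0A v0X0 v0U.
  have : edge_rel (X i0) (proj (X i0) y0) <> zero.
    by apply: count_rel_proj_neq0; rewrite // Xi0 (label_eq X0A erefl).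
  by case/(marginal_neq0_exists monoidK (margW i0)) => w; exists w.
apply: (@equations_inconsistent (extend w) X0A) => Y YA.
have [i Xi] := edge_of Y YA.
have [y [sol_y yw]] := count_rel_neq0 (marginal_neq0 monoidK (margW i) Ww).
rewrite Xi (label_eq YA erefl) in sol_y yw.
rewrite /equation (lin_eq_on (y' := y)) // => -[v|] //=.
by rewrite supp_a => /and3P[_ vY _]; apply: extend_proj yw vY.
Qed.

End EdgeRelations.

End Construction.

Section Irreducible.

Variables (V : finType) (A : {set {set V}}) (U : {set V}).
Hypothesis irrAU : gyo_irreducible A U.

Lemma gyo_irreducible_weights : exists a : V -> {set V} -> 'Z_3,
  (forall v X, (a v X != 0) = [&& X \in A, v \in X & v \in U]) /\
  (forall v, \sum_X a v X = 0).
Proof.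
case: irrAU => _ deg _.
have weights v : exists f : {set V} -> 'Z_3,
    (forall X, (f X != 0) = (X \in [set X in A | (v \in X) && (v \in U)])) /\
    \sum_X f X = 0.
  apply: exists_zero_sum_Z3; case vU: (v \in U).
    suff -> : [set X in A | (v \in X) && true] = [set X in A | v \in X].
      by rewrite neq_ltn deg ?orbT.
    by apply/setP => X; rewrite !inE andbT.
  suff -> : [set X in A | (v \in X) && false] = set0 by rewrite cards0.
  by apply/setP => X; rewrite !inE !andbF.
have [a aP] := fin_all_exists weights.
by exists a; split=> [v X | v]; [rewrite (aP v).1 !inE | apply: (aP v).2].
Qed.

Lemma gyo_irreducible_edge : exists2 X, X \in A & X :&: U != set0.
Proof.
case: irrAU => A_gt1 _ antichainA.
have [X [Y [XA YA neqXY]]] : exists X Y, [/\ X \in A, Y \in A & X != Y].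
  have [X XA] : exists X, X \in A by apply/set0Pn; rewrite -card_gt0 ltnW.
  have [Y] : exists Y, Y \in A :\ X.
    by apply/set0Pn; rewrite -card_gt0; move: A_gt1; rewrite (cardsD1 X A) XA.
  by case/setD1P=> neqYX YA; exists X, Y; rewrite eq_sym.
exists X => //; apply: contraNneq (antichainA X Y XA YA neqXY) => ->.
exact: sub0set.
Qed.

End Irreducible.

Theorem theorem5 (K : Type) (add : K -> K -> K) (zero : K)
  (V : finType) (E : {set {set V}}) :
  positive_comm_monoid add zero ->
  hypergraph E ->
  local_to_global add zero E ->
  acyclic E.
Proof.
move=> monoidK _ [m [X [[_ listX] l2g]]].
apply: acyclic_of_reducible => A U sAE covA irrAU.
have [a [supp_a a_sum0]] := gyo_irreducible_weights irrAU.
have [X0 X0A X0U] := gyo_irreducible_edge irrAU.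
have [a0 a0_neq0] := exists_neq0 monoidK.
have [_ _ antichainA] := irrAU.
have XE i : X i \in E by apply/listX; exists i.
apply: (edge_rels_not_globally_consistent antichainA supp_a a_sum0 monoidK a0_neq0
          listX sAE X0A X0U).
apply: l2g => [i | ]; first exact: is_Krel_count_rel.
exact: (edge_rels_pairwise_consistent covA antichainA supp_a X0 a0 monoidK XE).
Qed.
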